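(* Let $F$ be a $C^1$-closed smooth curve in the Euclidean plane parametrized by arc length $t\in[0,T]$ with signed curvature $k(t)$, and let $G\subset H^2$ be its development, i.e. a curve in the hyperbolic plane parametrized by arc length $t\in[0,T]$ whose signed geodesic curvature is $k(t)$. Then $G$ is $C^1$-closed if and only if the bicycle monodromy $M_F$ for the bicycle of length $\ell=1$ is the identity.
   Context: A differentiable curve is $C^1$-closed if its endpoints coincide and its oriented tangent lines at the endpoints coincide. The development $G$ is unique up to orientation-preserving isometry of $H^2$ (the hyperbolic plane of curvature $-1$). Bicycle model: a segment $RF$ of fixed length $\ell$ moves in the plane with the velocity of the rear end $R$ always parallel to $RF$; the bicycle monodromy $M_F$ is the self-map of the circle of radius $\ell$ sending the initial position of $R$ relative to the front end (moving along $F$) to its terminal position. *)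

From Stdlib Require Import Reals.
From Coquelicot Require Import Coquelicot.
Open Scope R_scope.

Definition smooth_fun (f : R -> R) : Prop := forall n x, ex_derive_n f n x.
Definition C2_fun (f : R -> R) : Prop :=
  forall x, ex_derive f x /\ ex_derive_n f 2 x.
Definition C1_fun (f : R -> R) : Prop := forall x, ex_derive f x.

Definition vec2 := (R * R)%type.
Definition sub2 (p q : vec2) : vec2 := (fst p - fst q, snd p - snd q).
Definition scal2 (c : R) (p : vec2) : vec2 := (c * fst p, c * snd p).
Definition dot2 (p q : vec2) : R := fst p * fst q + snd p * snd q.
Definition det2 (p q : vec2) : R := fst p * snd q - snd p * fst q.

Definition smooth_curve2 (F : R -> vec2) : Prop :=
  smooth_fun (fun s => fst (F s)) /\ smooth_fun (fun s => snd (F s)).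
Definition C1_curve2 (F : R -> vec2) : Prop :=
  C1_fun (fun s => fst (F s)) /\ C1_fun (fun s => snd (F s)).

Definition vel2 (F : R -> vec2) (t : R) : vec2 :=
  (Derive (fun s => fst (F s)) t, Derive (fun s => snd (F s)) t).
Definition acc2 (F : R -> vec2) (t : R) : vec2 :=
  (Derive_n (fun s => fst (F s)) 2 t, Derive_n (fun s => snd (F s)) 2 t).

Definition arclength2 (F : R -> vec2) (T : R) : Prop :=
  forall t, 0 <= t <= T -> dot2 (vel2 F t) (vel2 F t) = 1.

Definition curv2 (F : R -> vec2) (t : R) : R := det2 (vel2 F t) (acc2 F t).

(* C^1-closed on [0,T]: endpoints coincide and the oriented tangent lines
   coincide (same point, tangent vectors positively proportional). *)
Definition C1_closed2 (F : R -> vec2) (T : R) : Prop :=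
  F 0 = F T /\ exists c, 0 < c /\ vel2 F T = scal2 c (vel2 F 0).

(** * Hyperbolic plane H^2: hyperboloid model in Minkowski space R^{2,1} *)
Definition vec3 := (R * R * R)%type.
Definition c1 (p : vec3) : R := fst (fst p).
Definition c2 (p : vec3) : R := snd (fst p).
Definition c3 (p : vec3) : R := snd p.
Definition add3 (p q : vec3) : vec3 := ((c1 p + c1 q, c2 p + c2 q), c3 p + c3 q).
Definition scal3 (c : R) (p : vec3) : vec3 := ((c * c1 p, c * c2 p), c * c3 p).
Definition mink (p q : vec3) : R := c1 p * c1 q + c2 p * c2 q - c3 p * c3 q.
Definition in_H2 (p : vec3) : Prop := mink p p = -1 /\ 0 < c3 p.
(* Lorentzian cross product: p ⊠ q = J (p × q), J = diag(1,1,-1);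
   it satisfies mink (p ⊠ q) r = det(p,q,r). *)
Definition lcross (p q : vec3) : vec3 :=
  ((c2 p * c3 q - c3 p * c2 q, c3 p * c1 q - c1 p * c3 q),
   - (c1 p * c2 q - c2 p * c1 q)).

Definition C2_curve3 (G : R -> vec3) : Prop :=
  C2_fun (fun s => c1 (G s)) /\ C2_fun (fun s => c2 (G s)) /\
  C2_fun (fun s => c3 (G s)).

Definition vel3 (G : R -> vec3) (t : R) : vec3 :=
  ((Derive (fun s => c1 (G s)) t, Derive (fun s => c2 (G s)) t),
   Derive (fun s => c3 (G s)) t).
Definition acc3 (G : R -> vec3) (t : R) : vec3 :=
  ((Derive_n (fun s => c1 (G s)) 2 t, Derive_n (fun s => c2 (G s)) 2 t),
   Derive_n (fun s => c3 (G s)) 2 t).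

Definition H2_arclength (G : R -> vec3) (T : R) : Prop :=
  forall t, 0 <= t <= T -> in_H2 (G t) /\ mink (vel3 G t) (vel3 G t) = 1.

(* covariant acceleration: tangential projection of G'' onto T_{G(t)} H^2,
   v |-> v + <v,G> G *)
Definition cov_acc3 (G : R -> vec3) (t : R) : vec3 :=
  add3 (acc3 G t) (scal3 (mink (acc3 G t) (G t)) (G t)).
(* oriented unit normal N = G ⊠ G' in T_{G(t)} H^2 *)
Definition normal3 (G : R -> vec3) (t : R) : vec3 := lcross (G t) (vel3 G t).
Definition geod_curv (G : R -> vec3) (t : R) : R :=
  mink (cov_acc3 G t) (normal3 G t).

Definition C1_closed3 (G : R -> vec3) (T : R) : Prop :=
  G 0 = G T /\ exists c, 0 < c /\ vel3 G T = scal3 c (vel3 G 0).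

Definition bicycle_path (F : R -> vec2) (ell T : R) (Rr : R -> vec2) : Prop :=
  C1_curve2 Rr /\
  forall t, 0 <= t <= T ->
    dot2 (sub2 (F t) (Rr t)) (sub2 (F t) (Rr t)) = ell ^ 2 /\
    det2 (vel2 Rr t) (sub2 (F t) (Rr t)) = 0.

(* graph of the monodromy M_F : x |-> y, where x (resp. y) is the initial
   (resp. terminal) position of the rear end relative to the front end *)
Definition monodromy (F : R -> vec2) (ell T : R) (x y : vec2) : Prop :=
  exists Rr, bicycle_path F ell T Rr /\
    sub2 (Rr 0) (F 0) = x /\ sub2 (Rr T) (F T) = y.

Definition on_circle (ell : R) (x : vec2) : Prop := dot2 x x = ell ^ 2.

Definition monodromy_is_id (F : R -> vec2) (ell T : R) : Prop :=
  forall x y, on_circle ell x -> (monodromy F ell T x y <-> y = x).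

(* Write the rear end of the bicycle as [F + a F' + b JF'] with [a^2 + b^2 = 1] and
   let [N = G ⊠ G'] be the unit normal of [G].  The vector [n = G + a G' + b N] is
   null, and because [G] and [F] have the same curvature the bicycle equation becomes
   [n' = a n]: the null ray of [n], a point of the circle at infinity of [H^2], does
   not move.  So the monodromy is the composite of the identifications of the unit
   tangent circle of [F] with the circle at infinity given by the frames of [G] at
   [0] and at [T]; conversely, every fixed null vector yields a rear track.  If [G]
   is C^1-closed, both frames agree and the monodromy is the identity.  If the
   monodromy is the identity, the null vectors for [(a, b) = (1, 0), (-1, 0), (0, 1)]
   are only rescaled by positive factors; their mutual Minkowski products force these
   factors to be [1], so [G ± G'] agree at [0] and [T]. *)

From Stdlib Require Import Reals Lra Psatz.
From Coquelicot Require Import Coquelicot.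

Open Scope R_scope.

Lemma vec2_eq (u v : vec2) : fst u = fst v -> snd u = snd v -> u = v.
Proof. destruct u, v; cbn; intros -> ->; reflexivity. Qed.

Lemma vec3_eq (u v : vec3) : c1 u = c1 v -> c2 u = c2 v -> c3 u = c3 v -> u = v.
Proof.
destruct u as [[? ?] ?]; destruct v as [[? ?] ?]; unfold c1, c2, c3; cbn.
intros -> -> ->; reflexivity.
Qed.

Definition add2 (p q : vec2) : vec2 := (fst p + fst q, snd p + snd q).
Definition rot2 (p : vec2) : vec2 := (- snd p, fst p).

Ltac vec2_simpl := unfold dot2, det2, sub2, add2, scal2, rot2 in *; cbn [fst snd] in *.
Ltac vec3_simpl := unfold add3, scal3, mink, lcross, c1, c2, c3 in *; cbn [fst snd] in *.
Ltac vec3_ring :=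
  repeat match goal with p : vec3 |- _ => destruct p as [[? ?] ?] end;
  apply vec3_eq; vec3_simpl; ring.

Lemma dot2_sym (p q : vec2) : dot2 p q = dot2 q p.
Proof. unfold dot2; ring. Qed.

Lemma dot2_sub_l (u w p : vec2) : dot2 (sub2 u w) p = dot2 u p - dot2 w p.
Proof. vec2_simpl; ring. Qed.

Lemma dot2_rot2_sq (x p : vec2) :
  dot2 x p * dot2 x p + dot2 x (rot2 p) * dot2 x (rot2 p) = dot2 x x * dot2 p p.
Proof. destruct x, p; vec2_simpl; ring. Qed.

Lemma dot2_comb_l (a b : R) (p : vec2) : dot2 p p = 1 ->
  dot2 (add2 (scal2 a p) (scal2 b (rot2 p))) p = a.
Proof.
intros Hp; transitivity (a * dot2 p p); [destruct p; vec2_simpl; ring | rewrite Hp; ring].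
Qed.

Lemma dot2_comb_r (a b : R) (p : vec2) : dot2 p p = 1 ->
  dot2 (add2 (scal2 a p) (scal2 b (rot2 p))) (rot2 p) = b.
Proof.
intros Hp; transitivity (b * dot2 p p); [destruct p; vec2_simpl; ring | rewrite Hp; ring].
Qed.

Lemma rot2_decomp (x p : vec2) : dot2 p p = 1 ->
  x = add2 (scal2 (dot2 x p) p) (scal2 (dot2 x (rot2 p)) (rot2 p)).
Proof.
intros Hp; transitivity (scal2 (dot2 p p) x).
- rewrite Hp; destruct x; apply vec2_eq; vec2_simpl; ring.
- destruct x, p; apply vec2_eq; vec2_simpl; ring.
Qed.

Lemma unit_orth_rot2 (p q : vec2) : dot2 p p = 1 -> dot2 p q = 0 ->
  q = scal2 (det2 p q) (rot2 p).
Proof.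
intros Hp Hpq; rewrite (rot2_decomp q p Hp) at 1.
rewrite dot2_sym, Hpq.
replace (dot2 q (rot2 p)) with (det2 p q) by (destruct p, q; vec2_simpl; ring).
destruct p; apply vec2_eq; vec2_simpl; ring.
Qed.

Lemma mink_sym (p q : vec3) : mink p q = mink q p.
Proof. unfold mink; ring. Qed.
Lemma mink_addl (p q r : vec3) : mink (add3 p q) r = mink p r + mink q r.
Proof. vec3_simpl; ring. Qed.
Lemma mink_addr (p q r : vec3) : mink p (add3 q r) = mink p q + mink p r.
Proof. vec3_simpl; ring. Qed.
Lemma mink_scall (c : R) (p q : vec3) : mink (scal3 c p) q = c * mink p q.
Proof. vec3_simpl; ring. Qed.
Lemma mink_scalr (c : R) (p q : vec3) : mink p (scal3 c q) = c * mink p q.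
Proof. vec3_simpl; ring. Qed.

Ltac mink_expand := rewrite ?mink_addl, ?mink_addr, ?mink_scall, ?mink_scalr.

Lemma mink_lcross_l (p q : vec3) : mink p (lcross p q) = 0.
Proof. destruct p as [[? ?] ?]; destruct q as [[? ?] ?]; vec3_simpl; ring. Qed.
Lemma mink_lcross_r (p q : vec3) : mink q (lcross p q) = 0.
Proof. destruct p as [[? ?] ?]; destruct q as [[? ?] ?]; vec3_simpl; ring. Qed.
Lemma mink_lcross_lcross (p q : vec3) :
  mink (lcross p q) (lcross p q) = mink p q ^ 2 - mink p p * mink q q.
Proof. destruct p as [[? ?] ?]; destruct q as [[? ?] ?]; vec3_simpl; ring. Qed.

Lemma lcross_lcross_l (p q : vec3) :
  lcross p (lcross p q) = add3 (scal3 (mink p p) q) (scal3 (- mink p q) p).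
Proof. vec3_ring. Qed.
Lemma lcross_lcross_r (p q : vec3) :
  lcross q (lcross p q) = add3 (scal3 (- mink q q) p) (scal3 (mink q p) q).
Proof. vec3_ring. Qed.
Lemma lcross_lcross_swap (p q : vec3) :
  lcross (lcross p q) p = add3 (scal3 (- mink p p) q) (scal3 (mink p q) p).
Proof. vec3_ring. Qed.
Lemma lcross_cramer (a b c w : vec3) :
  scal3 (mink (lcross a b) c) w =
  add3 (scal3 (mink w a) (lcross b c))
    (add3 (scal3 (mink w b) (lcross c a)) (scal3 (mink w c) (lcross a b))).
Proof. vec3_ring. Qed.

Definition lorentz_frame (g v : vec3) : Prop :=
  mink g g = -1 /\ mink v v = 1 /\ mink g v = 0.

Lemma lorentz_frame_normal (g v : vec3) : lorentz_frame g v ->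
  mink (lcross g v) (lcross g v) = 1.
Proof. intros [Hgg [Hvv Hgv]]; rewrite mink_lcross_lcross, Hgg, Hvv, Hgv; ring. Qed.

Lemma lorentz_frame_decomp (g v w : vec3) : lorentz_frame g v ->
  w = add3 (scal3 (- mink w g) g)
        (add3 (scal3 (mink w v) v) (scal3 (mink w (lcross g v)) (lcross g v))).
Proof.
intros Hf; pose proof (lcross_cramer g v (lcross g v) w) as C.
rewrite (lorentz_frame_normal g v Hf), lcross_lcross_r, lcross_lcross_swap in C.
destruct Hf as [Hgg [Hvv Hgv]]; rewrite Hgg, Hvv, (mink_sym v g), Hgv in C.
transitivity (scal3 1 w); [vec3_ring | rewrite C; vec3_ring].
Qed.

Lemma mink_lorentz_frame (g v w : vec3) : lorentz_frame g v ->
  mink w w = - (mink w g * mink w g) + mink w v * mink w v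
             + mink w (lcross g v) * mink w (lcross g v).
Proof.
intros Hf; rewrite (lorentz_frame_decomp g v w Hf) at 1; mink_expand.
rewrite (mink_sym g w), (mink_sym v w), (mink_sym (lcross g v) w); ring.
Qed.

Lemma mink_lorentz_comb (g v : vec3) (a b a' b' : R) : lorentz_frame g v ->
  mink (add3 g (add3 (scal3 a v) (scal3 b (lcross g v))))
       (add3 g (add3 (scal3 a' v) (scal3 b' (lcross g v)))) = -1 + a * a' + b * b'.
Proof.
intros Hf; pose proof (lorentz_frame_normal g v Hf) as HNN; destruct Hf as [Hgg [Hvv Hgv]].
mink_expand.
rewrite (mink_sym v g), (mink_sym (lcross g v) g), (mink_sym (lcross g v) v),
  mink_lcross_l, mink_lcross_r, Hgg, Hvv, Hgv, HNN; ring.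
Qed.

Lemma lorentz_comb_coords (g v : vec3) (a b : R) : lorentz_frame g v ->
  mink (add3 g (add3 (scal3 a v) (scal3 b (lcross g v)))) g = -1 /\
  mink (add3 g (add3 (scal3 a v) (scal3 b (lcross g v)))) v = a /\
  mink (add3 g (add3 (scal3 a v) (scal3 b (lcross g v)))) (lcross g v) = b.
Proof.
intros Hf; pose proof (lorentz_frame_normal g v Hf) as HNN; destruct Hf as [Hgg [Hvv Hgv]].
mink_expand.
rewrite (mink_sym v g), (mink_sym (lcross g v) g), (mink_sym (lcross g v) v),
  mink_lcross_l, mink_lcross_r, Hgg, Hvv, Hgv, HNN; repeat split; ring.
Qed.

Lemma null_future_of_mink_H2 (n g : vec3) :
  mink n n = 0 -> mink n g = -1 -> in_H2 g -> 0 < c3 n.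
Proof.
destruct n as [[n1 n2] n3]; destruct g as [[g1 g2] g3]; unfold in_H2, mink, c1, c2, c3; cbn [fst snd].
intros Hnn Hng [Hgg Hg3].
destruct (Rle_lt_dec n3 0) as [Hn|Hn]; auto; exfalso.
assert (L : (n1*g1+n2*g2)^2 + (n1*g2-n2*g1)^2 = (n1*n1+n2*n2)*(g1*g1+g2*g2)) by ring.
replace (n1*n1+n2*n2) with (n3*n3) in L by lra.
replace (g1*g1+g2*g2) with (g3*g3-1) in L by lra.
replace (n1*g1+n2*g2) with (n3*g3-1) in L by lra.
assert (0 <= (n1*g2 - n2*g1)^2) by apply pow2_ge_0.
assert (n3*g3 <= 0) by nra.
nra.
Qed.

Lemma mink_future_null_H2_neg (n g : vec3) :
  mink n n = 0 -> 0 < c3 n -> in_H2 g -> mink n g < 0.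
Proof.
destruct n as [[n1 n2] n3]; destruct g as [[g1 g2] g3]; unfold in_H2, mink, c1, c2, c3; cbn [fst snd].
intros Hnn Hn3 [Hgg Hg3].
assert (L : (n1*g1+n2*g2)^2 + (n1*g2-n2*g1)^2 = (n1*n1+n2*n2)*(g1*g1+g2*g2)) by ring.
replace (n1*n1+n2*n2) with (n3*n3) in L by lra.
replace (g1*g1+g2*g2) with (g3*g3-1) in L by lra.
assert (0 <= (n1*g2 - n2*g1)^2) by apply pow2_ge_0.
destruct (Rlt_le_dec (n1 * g1 + n2 * g2 - n3 * g3) 0) as [Hq|Hq]; auto; exfalso.
assert (0 < n3*g3) by nra.
assert ((n3*g3)^2 <= (n1*g1+n2*g2)^2) by nra.
nra.
Qed.

Lemma is_derive_ext_value (f : R -> R) (t l l' : R) :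
  is_derive f t l -> l = l' -> is_derive f t l'.
Proof. intros Hd <-; exact Hd. Qed.

Lemma is_derive_const_on (f : R -> R) (T c t l : R) : 0 < T -> 0 <= t <= T ->
  (forall s, 0 <= s <= T -> f s = c) -> is_derive f t l -> l = 0.
Proof.
intros HT Ht Hc Hd; apply is_derive_Reals in Hd.
destruct (Req_dec l 0) as [|Hl]; auto; exfalso.
destruct (Hd (Rabs l) (Rabs_pos_lt _ Hl)) as [del Hdel].
pose proof (cond_pos del) as Hdel0.
assert (Hh : exists h, h <> 0 /\ Rabs h < del /\ 0 <= t + h <= T).
{ destruct (Rlt_le_dec t T).
  - exists (Rmin (del / 2) (T - t)).
    pose proof (Rmin_l (del / 2) (T - t)); pose proof (Rmin_r (del / 2) (T - t)).
    assert (0 < Rmin (del / 2) (T - t)) by (apply Rmin_glb_lt; lra).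
    rewrite Rabs_pos_eq; lra.
  - exists (- Rmin (del / 2) T).
    pose proof (Rmin_l (del / 2) T); pose proof (Rmin_r (del / 2) T).
    assert (0 < Rmin (del / 2) T) by (apply Rmin_glb_lt; lra).
    rewrite Rabs_Ropp, Rabs_pos_eq; lra. }
destruct Hh as [h [Hh0 [Hhdel Hth]]].
specialize (Hdel h Hh0 Hhdel); rewrite (Hc (t + h)), (Hc t) in Hdel by lra.
replace ((c - c) / h - l) with (- l) in Hdel by (field; exact Hh0).
rewrite Rabs_Ropp in Hdel; lra.
Qed.

Lemma is_derive_zero_const (f : R -> R) (T : R) : 0 < T ->
  (forall s, 0 <= s <= T -> is_derive f s 0) -> f T = f 0.
Proof.
intros HT Hd; destruct (MVT_gen f 0 T (fun _ => 0)) as [c [_ Hc]].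
- intros x Hx; apply Hd; rewrite Rmin_left, Rmax_right in Hx by lra; lra.
- intros x Hx; rewrite Rmin_left, Rmax_right in Hx by lra.
  apply derivable_continuous_pt; exists 0; apply is_derive_Reals, Hd; lra.
- lra.
Qed.

Lemma is_derive_Rplus (f g : R -> R) (x a b : R) :
  is_derive f x a -> is_derive g x b -> is_derive (fun s => f s + g s) x (a + b).
Proof. intros; now apply (is_derive_plus f g). Qed.
Lemma is_derive_Rminus (f g : R -> R) (x a b : R) :
  is_derive f x a -> is_derive g x b -> is_derive (fun s => f s - g s) x (a - b).
Proof. intros; now apply (is_derive_minus f g). Qed.
Lemma is_derive_Rmult (f g : R -> R) (x a b : R) :
  is_derive f x a -> is_derive g x b -> is_derive (fun s => f s * g s) x (a * g x + f x * b).
Proof. intros; apply (is_derive_mult f g); auto; intros; apply Rmult_comm. Qed.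
Lemma is_derive_Ropp (f : R -> R) (x a : R) :
  is_derive f x a -> is_derive (fun s => - f s) x (- a).
Proof. intros; now apply (is_derive_opp f). Qed.
Lemma is_derive_Rcomp (f g : R -> R) (x a b : R) :
  is_derive f (g x) a -> is_derive g x b -> is_derive (fun s => f (g s)) x (b * a).
Proof. intros; now apply (is_derive_comp f g). Qed.
Lemma is_derive_Rid (x : R) : is_derive (fun s => s) x 1.
Proof. apply (is_derive_id x). Qed.
Lemma is_derive_Rconst (c x : R) : is_derive (fun _ => c) x 0.
Proof. apply (is_derive_const c x). Qed.

Ltac derive_step := match goal with
 | |- is_derive (fun _ => _ + _) _ _ => apply is_derive_Rplus
 | |- is_derive (fun _ => _ - _) _ _ => apply is_derive_Rminus
 | |- is_derive (fun _ => _ * _) _ _ => apply is_derive_Rmult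
 | |- is_derive (fun _ => Ropp _) _ _ => apply is_derive_Ropp
 | H : is_derive ?f ?x _ |- is_derive ?f ?x _ => exact H
 | |- is_derive _ _ _ => apply is_derive_Rconst
 end.
Ltac derive_close := eapply is_derive_ext_value; [repeat derive_step | cbv beta; ring].

Definition is_derive3 (u : R -> vec3) (t : R) (w : vec3) : Prop :=
  is_derive (fun s => c1 (u s)) t (c1 w) /\ is_derive (fun s => c2 (u s)) t (c2 w) /\
  is_derive (fun s => c3 (u s)) t (c3 w).
Definition is_derive2 (u : R -> vec2) (t : R) (w : vec2) : Prop :=
  is_derive (fun s => fst (u s)) t (fst w) /\ is_derive (fun s => snd (u s)) t (snd w).

Ltac derive_unfold :=
  repeat match goal with
  | H : is_derive3 _ _ _ |- _ => destruct H as [? [? ?]]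
  | H : is_derive2 _ _ _ |- _ => destruct H end;
  unfold is_derive3, is_derive2, add3, scal3, lcross, mink,
    add2, sub2, scal2, rot2, dot2, c1, c2, c3 in *; cbn [fst snd] in *.
Ltac derive3_close := intros; derive_unfold; refine (conj _ (conj _ _)); derive_close.
Ltac derive2_close := intros; derive_unfold; split; derive_close.

Lemma is_derive3_ext_value (u : R -> vec3) (t : R) (w w' : vec3) :
  is_derive3 u t w -> w = w' -> is_derive3 u t w'.
Proof. intros Hd <-; exact Hd. Qed.
Lemma is_derive3_add (u w : R -> vec3) (t : R) (du dw : vec3) :
  is_derive3 u t du -> is_derive3 w t dw ->
  is_derive3 (fun s => add3 (u s) (w s)) t (add3 du dw).
Proof. derive3_close. Qed.
Lemma is_derive3_scal (f : R -> R) (u : R -> vec3) (t df : R) (du : vec3) :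
  is_derive f t df -> is_derive3 u t du ->
  is_derive3 (fun s => scal3 (f s) (u s)) t (add3 (scal3 df (u t)) (scal3 (f t) du)).
Proof. derive3_close. Qed.
Lemma is_derive3_lcross (u w : R -> vec3) (t : R) (du dw : vec3) :
  is_derive3 u t du -> is_derive3 w t dw ->
  is_derive3 (fun s => lcross (u s) (w s)) t (add3 (lcross du (w t)) (lcross (u t) dw)).
Proof. derive3_close. Qed.
Lemma is_derive_mink (u w : R -> vec3) (t : R) (du dw : vec3) :
  is_derive3 u t du -> is_derive3 w t dw ->
  is_derive (fun s => mink (u s) (w s)) t (mink du (w t) + mink (u t) dw).
Proof. intros; derive_unfold; derive_close. Qed.
Lemma is_derive_mink_const (n : vec3) (u : R -> vec3) (t : R) (du : vec3) :
  is_derive3 u t du -> is_derive (fun s => mink n (u s)) t (mink n du).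
Proof. intros; derive_unfold; derive_close. Qed.

Lemma is_derive2_add (u w : R -> vec2) (t : R) (du dw : vec2) :
  is_derive2 u t du -> is_derive2 w t dw ->
  is_derive2 (fun s => add2 (u s) (w s)) t (add2 du dw).
Proof. derive2_close. Qed.
Lemma is_derive2_sub (u w : R -> vec2) (t : R) (du dw : vec2) :
  is_derive2 u t du -> is_derive2 w t dw ->
  is_derive2 (fun s => sub2 (u s) (w s)) t (sub2 du dw).
Proof. derive2_close. Qed.
Lemma is_derive2_scal (f : R -> R) (u : R -> vec2) (t df : R) (du : vec2) :
  is_derive f t df -> is_derive2 u t du ->
  is_derive2 (fun s => scal2 (f s) (u s)) t (add2 (scal2 df (u t)) (scal2 (f t) du)).
Proof. derive2_close. Qed.
Lemma is_derive2_rot2 (u : R -> vec2) (t : R) (du : vec2) :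
  is_derive2 u t du -> is_derive2 (fun s => rot2 (u s)) t (rot2 du).
Proof. derive2_close. Qed.
Lemma is_derive_dot2 (u w : R -> vec2) (t : R) (du dw : vec2) :
  is_derive2 u t du -> is_derive2 w t dw ->
  is_derive (fun s => dot2 (u s) (w s)) t (dot2 du (w t) + dot2 (u t) dw).
Proof. intros; derive_unfold; derive_close. Qed.

Lemma is_derive2_vel2 (u : R -> vec2) (t : R) (w : vec2) :
  is_derive2 u t w -> vel2 u t = w.
Proof. intros [H1 H2]; apply vec2_eq; apply is_derive_unique; assumption. Qed.

Lemma is_derive2_C1_curve2 (u : R -> vec2) :
  (forall t, exists w, is_derive2 u t w) -> C1_curve2 u.
Proof. intros Hd; split; intros t; destruct (Hd t) as [w [H1 H2]]; eexists; eassumption. Qed.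

Lemma C1_curve2_is_derive2 (u : R -> vec2) : C1_curve2 u -> forall t, is_derive2 u t (vel2 u t).
Proof. intros [H1 H2] t; split; apply Derive_correct; auto. Qed.

Lemma smooth_curve2_is_derive2 (F : R -> vec2) : smooth_curve2 F -> forall t,
  is_derive2 F t (vel2 F t) /\ is_derive2 (vel2 F) t (acc2 F t).
Proof.
intros [H1 H2] t.
split; split; apply Derive_correct;
  [apply (H1 1%nat t) | apply (H2 1%nat t) | apply (H1 2%nat t) | apply (H2 2%nat t)].
Qed.

Lemma C2_curve3_is_derive3 (G : R -> vec3) : C2_curve3 G -> forall t,
  is_derive3 G t (vel3 G t) /\ is_derive3 (vel3 G) t (acc3 G t).
Proof.
intros [H1 [H2 H3]] t.
destruct (H1 t), (H2 t), (H3 t).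
split; refine (conj _ (conj _ _)); apply Derive_correct; assumption.
Qed.

Lemma is_derive3_ray (u : R -> vec3) (f : R -> R) (T : R) : 0 < T ->
  (forall s, 0 <= s <= T -> is_derive3 u s (scal3 (f s) (u s))) ->
  (forall s, 0 <= s <= T -> 0 < c3 (u s)) ->
  exists lam, 0 < lam /\ u T = scal3 lam (u 0).
Proof.
intros HT Hu Hpos.
assert (Hratio : forall ci : vec3 -> R,
  (forall s, 0 <= s <= T -> is_derive (fun s => ci (u s)) s (f s * ci (u s))) ->
  ci (u T) / c3 (u T) = ci (u 0) / c3 (u 0)).
{ intros ci Hci.
  apply (is_derive_zero_const (fun s => ci (u s) / c3 (u s)) T HT); intros s Hs.
  pose proof (Hpos s Hs).
  eapply is_derive_ext_value.
  - apply is_derive_div; [apply Hci, Hs | apply (Hu s Hs) | lra].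
  - unfold scal3, c3; cbn [fst snd]; field; unfold c3 in *; lra. }
pose proof (Hratio c1 (fun s Hs => proj1 (Hu s Hs))) as H1.
pose proof (Hratio c2 (fun s Hs => proj1 (proj2 (Hu s Hs)))) as H2.
pose proof (Hpos 0 ltac:(lra)) as P0; pose proof (Hpos T ltac:(lra)) as PT.
exists (c3 (u T) / c3 (u 0)); split; [apply Rdiv_lt_0_compat; assumption|].
destruct (u T) as [[a1 a2] a3], (u 0) as [[b1 b2] b3]; vec3_simpl.
apply vec3_eq; unfold c1, c2, c3; cbn [fst snd].
- transitivity (a1 / a3 * a3); [field; lra|]; rewrite H1; field; lra.
- transitivity (a2 / a3 * a3); [field; lra|]; rewrite H2; field; lra.
- field; lra.
Qed.

Definition pos_sq (u : R) : R := Rmax 0 u * Rmax 0 u.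

Lemma is_derive_pos_sq (u : R) : is_derive pos_sq u (2 * Rmax 0 u).
Proof.
assert (Hrem : forall h, Rabs (pos_sq (u + h) - pos_sq u - 2 * Rmax 0 u * h) <= h * h).
{ intros h; unfold pos_sq, Rmax.
  destruct (Rle_dec 0 (u + h)), (Rle_dec 0 u); rewrite Rabs_right; nra. }
apply is_derive_Reals; intros eps Heps; exists (mkposreal eps Heps); intros h Hh Hha; cbn in Hha.
pose proof (Rabs_pos_lt h Hh) as Hh0.
replace ((pos_sq (u + h) - pos_sq u) / h - 2 * Rmax 0 u)
  with ((pos_sq (u + h) - pos_sq u - 2 * Rmax 0 u * h) / h) by (field; auto).
unfold Rdiv; rewrite Rabs_mult, Rabs_inv.
apply (Rmult_lt_reg_r (Rabs h)); [exact Hh0|].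
rewrite Rmult_assoc, Rinv_l, Rmult_1_r by lra.
assert (h * h = Rabs h * Rabs h) by (rewrite <- Rabs_mult, Rabs_right; nra).
specialize (Hrem h); nra.
Qed.

Definition cutoff (T s : R) : R := pos_sq (- s) + pos_sq (s - T).

Lemma cutoff_in (T s : R) : 0 <= s <= T -> cutoff T s = 0.
Proof. intros Hs; unfold cutoff, pos_sq; rewrite !Rmax_left by lra; ring. Qed.

Lemma cutoff_out (T s : R) : ~ (0 <= s <= T) -> 0 < cutoff T s.
Proof.
intros Hs; unfold cutoff, pos_sq.
pose proof (Rmax_l 0 (- s)); pose proof (Rmax_r 0 (- s)).
pose proof (Rmax_l 0 (s - T)); pose proof (Rmax_r 0 (s - T)).
destruct (Rlt_le_dec s 0); [|destruct (Rlt_le_dec T s)]; nra.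
Qed.

Lemma is_derive_cutoff (T s : R) :
  is_derive (cutoff T) s (2 * Rmax 0 (s - T) - 2 * Rmax 0 (- s)).
Proof.
unfold cutoff; eapply is_derive_ext_value.
- apply is_derive_Rplus; apply (is_derive_Rcomp pos_sq); try apply is_derive_pos_sq.
  + apply is_derive_Ropp, is_derive_Rid.
  + apply is_derive_Rminus; [apply is_derive_Rid | apply is_derive_Rconst].
- ring.
Qed.

Lemma is_derive_cutoff_in (T s : R) : 0 <= s <= T -> is_derive (cutoff T) s 0.
Proof.
intros Hs; eapply is_derive_ext_value; [apply is_derive_cutoff|].
rewrite !Rmax_left by lra; ring.
Qed.

(* Rear tracks must be C^1 on the whole line, whereas the depth of a null vector
   below [G] is only known to be positive on [0, T]; [inv_on T f] equals [/ f] there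
   and stays differentiable outside. *)
Definition inv_on (T : R) (f : R -> R) (s : R) : R := f s / (f s * f s + cutoff T s).

Lemma inv_on_denom_neq0 (T : R) (f : R -> R) (s : R) :
  (0 <= s <= T -> f s <> 0) -> f s * f s + cutoff T s <> 0.
Proof.
intros Hf; destruct (Rle_dec 0 s), (Rle_dec s T).
- rewrite cutoff_in by lra; specialize (Hf ltac:(lra)); nra.
- pose proof (cutoff_out T s ltac:(lra)); nra.
- pose proof (cutoff_out T s ltac:(lra)); nra.
- pose proof (cutoff_out T s ltac:(lra)); nra.
Qed.

Lemma inv_on_in (T : R) (f : R -> R) (s : R) : 0 <= s <= T -> f s <> 0 ->
  inv_on T f s = / f s.
Proof. intros Hs Hf; unfold inv_on; rewrite cutoff_in by exact Hs; field; exact Hf. Qed.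

Lemma ex_derive_inv_on (T : R) (f : R -> R) (s df : R) : is_derive f s df ->
  (0 <= s <= T -> f s <> 0) -> ex_derive (inv_on T f) s.
Proof.
intros Hd Hf; eexists; apply is_derive_div; [exact Hd | | apply inv_on_denom_neq0, Hf].
apply is_derive_Rplus; [apply is_derive_Rmult; exact Hd | apply is_derive_cutoff].
Qed.

Lemma is_derive_inv_on_in (T : R) (f : R -> R) (s df : R) : is_derive f s df ->
  0 <= s <= T -> f s <> 0 -> is_derive (inv_on T f) s (- df / (f s * f s)).
Proof.
intros Hd Hs Hf; eapply is_derive_ext_value.
- apply is_derive_div; [exact Hd | | apply inv_on_denom_neq0; intros; exact Hf].
  apply is_derive_Rplus; [apply is_derive_Rmult; exact Hd | apply is_derive_cutoff_in, Hs].
- cbv beta; rewrite cutoff_in by exact Hs; field; exact Hf.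
Qed.

Section Development.

Variables (T : R) (G : R -> vec3).
Hypotheses (HT : 0 < T) (HG : C2_curve3 G) (HGa : H2_arclength G T).

Lemma mink_G_vel3 (t : R) : 0 <= t <= T -> mink (G t) (vel3 G t) = 0.
Proof.
intros Ht; destruct (C2_curve3_is_derive3 G HG t) as [dG _].
pose proof (is_derive_const_on _ T (-1) t _ HT Ht (fun s Hs => proj1 (proj1 (HGa s Hs)))
  (is_derive_mink _ _ _ _ _ dG dG)) as E.
rewrite (mink_sym (vel3 G t)) in E; lra.
Qed.

Lemma H2_lorentz_frame (t : R) : 0 <= t <= T -> lorentz_frame (G t) (vel3 G t).
Proof.
intros Ht; destruct (HGa t Ht) as [[Hgg _] Hvv].
split; [exact Hgg | split; [exact Hvv | apply mink_G_vel3, Ht]].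
Qed.

Lemma mink_acc3 (t : R) : 0 <= t <= T ->
  mink (G t) (acc3 G t) = -1 /\ mink (vel3 G t) (acc3 G t) = 0.
Proof.
intros Ht; destruct (C2_curve3_is_derive3 G HG t) as [dG dV].
destruct (HGa t Ht) as [_ Hvv]; split.
- pose proof (is_derive_const_on _ T 0 t _ HT Ht mink_G_vel3
    (is_derive_mink _ _ _ _ _ dG dV)) as E.
  rewrite Hvv in E; lra.
- pose proof (is_derive_const_on _ T 1 t _ HT Ht (fun s Hs => proj2 (HGa s Hs))
    (is_derive_mink _ _ _ _ _ dV dV)) as E.
  rewrite (mink_sym (acc3 G t)) in E; lra.
Qed.

Lemma H2_acc3 (t : R) : 0 <= t <= T ->
  acc3 G t = add3 (G t) (scal3 (geod_curv G t) (normal3 G t)).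
Proof.
intros Ht; destruct (mink_acc3 t Ht) as [Hga Hva].
assert (Hk : geod_curv G t = mink (acc3 G t) (normal3 G t)).
{ unfold geod_curv, cov_acc3, normal3; mink_expand; rewrite mink_lcross_l; ring. }
rewrite Hk; unfold normal3.
rewrite (lorentz_frame_decomp (G t) (vel3 G t) (acc3 G t) (H2_lorentz_frame t Ht)) at 1.
rewrite (mink_sym (acc3 G t) (G t)), Hga, (mink_sym (acc3 G t) (vel3 G t)), Hva.
generalize (mink (acc3 G t) (lcross (G t) (vel3 G t))); intros k.
generalize (G t) (vel3 G t); intros; vec3_ring.
Qed.

Lemma is_derive3_normal3 (t : R) : is_derive3 (normal3 G) t (lcross (G t) (acc3 G t)).
Proof.
destruct (C2_curve3_is_derive3 G HG t) as [dG dV].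
eapply is_derive3_ext_value; [apply (is_derive3_lcross _ _ _ _ _ dG dV)|].
generalize (G t) (vel3 G t) (acc3 G t); intros; vec3_ring.
Qed.

Lemma lcross_acc3 (t : R) : 0 <= t <= T ->
  lcross (G t) (acc3 G t) = scal3 (- geod_curv G t) (vel3 G t).
Proof.
intros Ht; rewrite (H2_acc3 t Ht); unfold normal3.
destruct (H2_lorentz_frame t Ht) as [Hgg [_ Hgv]].
transitivity (scal3 (geod_curv G t) (lcross (G t) (lcross (G t) (vel3 G t)))).
- generalize (geod_curv G t) (G t) (vel3 G t); intros; vec3_ring.
- rewrite lcross_lcross_l, Hgg, Hgv.
  generalize (geod_curv G t) (G t) (vel3 G t); intros; vec3_ring.
Qed.

(* The null vector of [H^2 ⊂ R^{2,1}] determined by the unit tangent direction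
   [a G' + b N] at [G t]; it represents a point of the circle at infinity. *)
Definition null_lift (a b t : R) : vec3 :=
  add3 (G t) (add3 (scal3 a (vel3 G t)) (scal3 b (normal3 G t))).

Lemma mink_null_lift (a b a' b' t : R) : 0 <= t <= T ->
  mink (null_lift a b t) (null_lift a' b' t) = -1 + a * a' + b * b'.
Proof. intros Ht; apply mink_lorentz_comb, H2_lorentz_frame, Ht. Qed.

Lemma null_lift_coords (a b t : R) : 0 <= t <= T ->
  mink (null_lift a b t) (G t) = -1 /\ mink (null_lift a b t) (vel3 G t) = a /\
  mink (null_lift a b t) (normal3 G t) = b.
Proof. intros Ht; apply lorentz_comb_coords, H2_lorentz_frame, Ht. Qed.

Lemma C1_closed3_frame : C1_closed3 G T -> G T = G 0 /\ vel3 G T = vel3 G 0.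
Proof.
intros [HG0 [c [Hc Hv]]]; split; [auto|].
assert (Hc1 : c = 1).
{ pose proof (proj2 (HGa T ltac:(lra))) as E.
  rewrite Hv, mink_scall, mink_scalr, (proj2 (HGa 0 ltac:(lra))) in E; nra. }
rewrite Hv, Hc1; destruct (vel3 G 0) as [[? ?] ?]; apply vec3_eq; vec3_simpl; ring.
Qed.

Ltac vec3_lra_from E1 E2 := apply vec3_eq;
  [ apply (f_equal c1) in E1; apply (f_equal c1) in E2
  | apply (f_equal c2) in E1; apply (f_equal c2) in E2
  | apply (f_equal c3) in E1; apply (f_equal c3) in E2 ]; vec3_simpl; lra.

(* The rescaling factors of three null directions are tied by their mutual
   Minkowski products, which forces all of them to be [1]. *)
Lemma null_lift_rays_C1_closed3 :
  (forall a b, a * a + b * b = 1 ->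
     exists lam, 0 < lam /\ null_lift a b T = scal3 lam (null_lift a b 0)) ->
  C1_closed3 G T.
Proof.
intros Hray.
assert (Hprod : forall a b a' b' l l',
  null_lift a b T = scal3 l (null_lift a b 0) ->
  null_lift a' b' T = scal3 l' (null_lift a' b' 0) ->
  l * l' * (-1 + a * a' + b * b') = -1 + a * a' + b * b').
{ intros a b a' b' l l' Ea Eb.
  rewrite <- (mink_null_lift a b a' b' T) at 2 by lra.
  rewrite Ea, Eb, mink_scall, mink_scalr, mink_null_lift by lra; ring. }
destruct (Hray 1 0) as [l1 [L1 E1]]; [ring|].
destruct (Hray (-1) 0) as [l2 [L2 E2]]; [ring|].
destruct (Hray 0 1) as [l3 [L3 E3]]; [ring|].
pose proof (Hprod _ _ _ _ _ _ E1 E2) as P12.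
pose proof (Hprod _ _ _ _ _ _ E1 E3) as P13.
pose proof (Hprod _ _ _ _ _ _ E2 E3) as P23.
assert (Hl1 : l1 = 1) by nra.
assert (Hl2 : l2 = 1) by nra.
rewrite Hl1 in E1; rewrite Hl2 in E2; unfold null_lift in E1, E2.
split; [|exists 1; split; [lra|]]; vec3_lra_from E1 E2.
Qed.

Variable F : R -> vec2.
Hypotheses (HF : smooth_curve2 F) (HFa : arclength2 F T).

Lemma plane_acc2 (t : R) : 0 <= t <= T -> acc2 F t = scal2 (curv2 F t) (rot2 (vel2 F t)).
Proof.
intros Ht; destruct (smooth_curve2_is_derive2 F HF t) as [_ dP].
apply unit_orth_rot2; [apply HFa, Ht|].
pose proof (is_derive_const_on _ T 1 t _ HT Ht HFa (is_derive_dot2 _ _ _ _ _ dP dP)) as E.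
rewrite (dot2_sym (acc2 F t)) in E; lra.
Qed.

Lemma C1_closed2_vel2 : C1_closed2 F T -> vel2 F T = vel2 F 0.
Proof.
intros [_ [c [Hc Hv]]].
assert (Hc1 : c = 1).
{ pose proof (HFa T ltac:(lra)) as E; rewrite Hv in E.
  replace (dot2 (scal2 c (vel2 F 0)) (scal2 c (vel2 F 0)))
    with (c * c * dot2 (vel2 F 0) (vel2 F 0)) in E by (vec2_simpl; ring).
  rewrite (HFa 0 ltac:(lra)) in E; nra. }
rewrite Hv, Hc1; destruct (vel2 F 0); apply vec2_eq; vec2_simpl; ring.
Qed.

Hypothesis Hk : forall t, 0 <= t <= T -> geod_curv G t = curv2 F t.

(** ** From rear tracks to null rays *)

Definition offset (Rr : R -> vec2) (s : R) : vec2 := sub2 (Rr s) (F s).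
Definition offset_tan (Rr : R -> vec2) (s : R) : R := dot2 (offset Rr s) (vel2 F s).
Definition offset_nor (Rr : R -> vec2) (s : R) : R := dot2 (offset Rr s) (rot2 (vel2 F s)).
Definition offset_lift (Rr : R -> vec2) (s : R) : vec3 :=
  null_lift (offset_tan Rr s) (offset_nor Rr s) s.

Lemma offset_decomp (Rr : R -> vec2) (s : R) : 0 <= s <= T ->
  offset Rr s = add2 (scal2 (offset_tan Rr s) (vel2 F s))
                     (scal2 (offset_nor Rr s) (rot2 (vel2 F s))).
Proof. intros Hs; apply rot2_decomp, HFa, Hs. Qed.

Lemma bicycle_offset_unit (Rr : R -> vec2) : bicycle_path F 1 T Rr ->
  forall s, 0 <= s <= T -> dot2 (offset Rr s) (offset Rr s) = 1.
Proof.
intros [_ HB] s Hs; destruct (HB s Hs) as [H _].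
transitivity (1 ^ 2); [|ring]; rewrite <- H.
unfold offset; destruct (Rr s), (F s); vec2_simpl; ring.
Qed.

Lemma offset_coords_unit (Rr : R -> vec2) : bicycle_path F 1 T Rr ->
  forall s, 0 <= s <= T ->
  offset_tan Rr s * offset_tan Rr s + offset_nor Rr s * offset_nor Rr s = 1.
Proof.
intros HB s Hs; unfold offset_tan, offset_nor.
rewrite dot2_rot2_sq, (bicycle_offset_unit Rr HB s Hs), (HFa s Hs); ring.
Qed.

Lemma bicycle_rear_velocity (Rr : R -> vec2) : bicycle_path F 1 T Rr ->
  forall t, 0 <= t <= T -> vel2 Rr t = scal2 (offset_tan Rr t) (offset Rr t).
Proof.
intros HB t Ht.
pose proof (bicycle_offset_unit Rr HB) as HXX.
destruct (smooth_curve2_is_derive2 F HF t) as [dF _].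
pose proof (is_derive2_sub _ _ _ _ _ (C1_curve2_is_derive2 Rr (proj1 HB) t) dF) as dX.
pose proof (is_derive_const_on _ T 1 t _ HT Ht HXX (is_derive_dot2 _ _ _ _ _ dX dX)) as Horth.
pose proof (proj2 (proj2 HB t Ht)) as Hpar.
rewrite (rot2_decomp (vel2 Rr t) (offset Rr t) (HXX t Ht)).
replace (dot2 (vel2 Rr t) (rot2 (offset Rr t))) with 0
  by (rewrite <- Hpar; unfold offset; destruct (vel2 Rr t), (Rr t), (F t); vec2_simpl; ring).
replace (dot2 (vel2 Rr t) (offset Rr t)) with (offset_tan Rr t).
- destruct (offset Rr t); apply vec2_eq; vec2_simpl; ring.
- unfold offset_tan, offset in *.
  destruct (vel2 Rr t), (vel2 F t), (Rr t), (F t); vec2_simpl; lra.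
Qed.

(* The bicycle equation, transported by the development, is [n' = a n]. *)
Lemma is_derive3_offset_lift (Rr : R -> vec2) : bicycle_path F 1 T Rr ->
  forall t, 0 <= t <= T ->
  is_derive3 (offset_lift Rr) t (scal3 (offset_tan Rr t) (offset_lift Rr t)).
Proof.
intros HB t Ht.
destruct (C2_curve3_is_derive3 G HG t) as [dG dV].
destruct (smooth_curve2_is_derive2 F HF t) as [dF dP].
pose proof (is_derive2_sub _ _ _ _ _ (C1_curve2_is_derive2 Rr (proj1 HB) t) dF) as dX.
pose proof (is_derive_dot2 _ _ _ _ _ dX dP) as da.
pose proof (is_derive_dot2 _ _ _ _ _ dX (is_derive2_rot2 _ _ _ dP)) as db.
eapply is_derive3_ext_value.
{ exact (is_derive3_add _ _ _ _ _ dG (is_derive3_add _ _ _ _ _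
    (is_derive3_scal _ _ _ _ _ da dV) (is_derive3_scal _ _ _ _ _ db (is_derive3_normal3 t)))). }
rewrite (lcross_acc3 t Ht), (H2_acc3 t Ht), (Hk t Ht), (plane_acc2 t Ht).
rewrite (bicycle_rear_velocity Rr HB t Ht).
rewrite !dot2_sub_l, (HFa t Ht).
unfold offset_lift, null_lift, offset_tan, offset_nor, offset.
generalize (G t) (vel3 G t) (normal3 G t) (curv2 F t); intros g v n k.
destruct (vel2 F t) as [p1 p2], (Rr t) as [r1 r2], (F t) as [f1 f2].
vec2_simpl; apply vec3_eq; vec3_simpl; ring.
Qed.

Lemma offset_lift_coords (Rr : R -> vec2) (t : R) : 0 <= t <= T ->
  mink (offset_lift Rr t) (G t) = -1 /\
  mink (offset_lift Rr t) (vel3 G t) = offset_tan Rr t /\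
  mink (offset_lift Rr t) (normal3 G t) = offset_nor Rr t.
Proof. apply null_lift_coords. Qed.

Lemma offset_lift_future (Rr : R -> vec2) : bicycle_path F 1 T Rr ->
  forall t, 0 <= t <= T -> 0 < c3 (offset_lift Rr t).
Proof.
intros HB t Ht; apply (null_future_of_mink_H2 _ (G t)).
- unfold offset_lift; rewrite mink_null_lift by exact Ht.
  pose proof (offset_coords_unit Rr HB t Ht); lra.
- apply (offset_lift_coords Rr t Ht).
- apply (HGa t Ht).
Qed.

Lemma offset_lift_ray (Rr : R -> vec2) : bicycle_path F 1 T Rr ->
  exists lam, 0 < lam /\ offset_lift Rr T = scal3 lam (offset_lift Rr 0).
Proof.
intros HB; apply (is_derive3_ray _ (offset_tan Rr) T HT).
- apply is_derive3_offset_lift, HB.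
- apply offset_lift_future, HB.
Qed.

Lemma C1_closed3_offset_periodic (Rr : R -> vec2) : C1_closed2 F T -> C1_closed3 G T ->
  bicycle_path F 1 T Rr -> offset Rr T = offset Rr 0.
Proof.
intros HFc HGc HB.
assert (H0 : 0 <= 0 <= T) by lra; assert (H1 : 0 <= T <= T) by lra.
destruct (C1_closed3_frame HGc) as [HG0 HV0].
assert (HN0 : normal3 G T = normal3 G 0) by (unfold normal3; rewrite HG0, HV0; reflexivity).
destruct (offset_lift_coords Rr T H1) as [CgT [CaT CbT]].
destruct (offset_lift_coords Rr 0 H0) as [Cg0 [Ca0 Cb0]].
destruct (offset_lift_ray Rr HB) as [lam [Hlam Hray]].
rewrite Hray, mink_scall in CgT, CaT, CbT; rewrite HG0, Cg0 in CgT.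
assert (Hl : lam = 1) by lra; subst lam.
rewrite HV0, Ca0 in CaT; rewrite HN0, Cb0 in CbT.
rewrite (offset_decomp Rr T H1), (offset_decomp Rr 0 H0), (C1_closed2_vel2 HFc).
rewrite <- CaT, <- CbT; f_equal; f_equal; ring.
Qed.

(** ** From null rays to rear tracks *)

Definition lift_depth (n : vec3) (s : R) : R := - mink n (G s).
Definition null_offset_dir (n : vec3) (s : R) : vec2 :=
  add2 (scal2 (mink n (vel3 G s)) (vel2 F s)) (scal2 (mink n (normal3 G s)) (rot2 (vel2 F s))).
(* The rear track whose null lift is the fixed vector [n]. *)
Definition rear_of_null (n : vec3) (s : R) : vec2 :=
  add2 (F s) (scal2 (inv_on T (lift_depth n) s) (null_offset_dir n s)).

Lemma is_derive_lift_depth (n : vec3) (s : R) :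
  is_derive (lift_depth n) s (- mink n (vel3 G s)).
Proof.
apply is_derive_Ropp, is_derive_mink_const, (C2_curve3_is_derive3 G HG s).
Qed.

Lemma is_derive2_null_offset_dir (n : vec3) (s : R) :
  is_derive2 (null_offset_dir n) s
    (add2 (add2 (scal2 (mink n (acc3 G s)) (vel2 F s)) (scal2 (mink n (vel3 G s)) (acc2 F s)))
          (add2 (scal2 (mink n (lcross (G s) (acc3 G s))) (rot2 (vel2 F s)))
                (scal2 (mink n (normal3 G s)) (rot2 (acc2 F s))))).
Proof.
destruct (C2_curve3_is_derive3 G HG s) as [_ dV].
destruct (smooth_curve2_is_derive2 F HF s) as [_ dP].
apply is_derive2_add; apply is_derive2_scal;
  [apply is_derive_mink_const, dV | exact dP
  | apply is_derive_mink_const, is_derive3_normal3 | apply is_derive2_rot2, dP].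
Qed.

Lemma is_derive2_null_offset_dir_in (n : vec3) (s : R) : 0 <= s <= T ->
  is_derive2 (null_offset_dir n) s (scal2 (- lift_depth n s) (vel2 F s)).
Proof.
intros Hs; replace (scal2 (- lift_depth n s) (vel2 F s)) with
  (add2 (add2 (scal2 (mink n (acc3 G s)) (vel2 F s)) (scal2 (mink n (vel3 G s)) (acc2 F s)))
          (add2 (scal2 (mink n (lcross (G s) (acc3 G s))) (rot2 (vel2 F s)))
                (scal2 (mink n (normal3 G s)) (rot2 (acc2 F s))))).
- apply is_derive2_null_offset_dir.
- rewrite (lcross_acc3 s Hs), (H2_acc3 s Hs), (plane_acc2 s Hs), (Hk s Hs).
  unfold lift_depth; mink_expand.
  destruct (vel2 F s); apply vec2_eq; vec2_simpl; ring.
Qed.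

Lemma dot2_null_offset_dir (n : vec3) (s : R) : 0 <= s <= T -> mink n n = 0 ->
  dot2 (null_offset_dir n s) (null_offset_dir n s) = lift_depth n s * lift_depth n s.
Proof.
intros Hs Hnn; pose proof (HFa s Hs) as Hp.
transitivity (dot2 (null_offset_dir n s) (null_offset_dir n s) * dot2 (vel2 F s) (vel2 F s));
  [rewrite Hp; ring|].
rewrite <- dot2_rot2_sq; unfold null_offset_dir; rewrite dot2_comb_l, dot2_comb_r by exact Hp.
pose proof (mink_lorentz_frame (G s) (vel3 G s) n (H2_lorentz_frame s Hs)) as E.
unfold lift_depth, normal3; lra.
Qed.

Lemma vel2_rear_of_null (n : vec3) (s : R) : (forall s, 0 <= s <= T -> 0 < lift_depth n s) ->
  0 <= s <= T -> vel2 (rear_of_null n) s =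
  scal2 (mink n (vel3 G s) / (lift_depth n s * lift_depth n s)) (null_offset_dir n s).
Proof.
intros HD Hs; pose proof (HD s Hs) as HDs.
destruct (smooth_curve2_is_derive2 F HF s) as [dF _].
pose proof (is_derive2_add _ _ _ _ _ dF (is_derive2_scal _ _ _ _ _
  (is_derive_inv_on_in T _ s _ (is_derive_lift_depth n s) Hs ltac:(lra))
  (is_derive2_null_offset_dir_in n s Hs))) as D.
rewrite (is_derive2_vel2 (rear_of_null n) s _ D), inv_on_in by lra.
destruct (vel2 F s), (null_offset_dir n s); apply vec2_eq; vec2_simpl; field; lra.
Qed.

Lemma rear_of_null_bicycle (n : vec3) : mink n n = 0 -> 0 < c3 n ->
  bicycle_path F 1 T (rear_of_null n).
Proof.
intros Hnn Hn3.
assert (HD : forall s, 0 <= s <= T -> 0 < lift_depth n s).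
{ intros s Hs; pose proof (mink_future_null_H2_neg n (G s) Hnn Hn3 (proj1 (HGa s Hs))).
  unfold lift_depth; lra. }
split.
- apply is_derive2_C1_curve2; intros s.
  destruct (ex_derive_inv_on T (lift_depth n) s _ (is_derive_lift_depth n s)
    (fun Hs => Rgt_not_eq _ _ (HD s Hs))) as [di Hdi].
  destruct (smooth_curve2_is_derive2 F HF s) as [dF _].
  eexists; exact (is_derive2_add _ _ _ _ _ dF
    (is_derive2_scal _ _ _ _ _ Hdi (is_derive2_null_offset_dir n s))).
- intros s Hs; pose proof (HD s Hs) as HDs.
  pose proof (dot2_null_offset_dir n s Hs Hnn) as HY.
  rewrite (vel2_rear_of_null n s HD Hs); unfold rear_of_null; rewrite inv_on_in by lra.
  destruct (null_offset_dir n s), (F s); vec2_simpl; split; [|field; lra].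
  transitivity ((r * r + r0 * r0) / (lift_depth n s * lift_depth n s)); [field; lra|].
  rewrite HY; field; lra.
Qed.

Lemma exists_bicycle_path (x : vec2) : on_circle 1 x ->
  exists Rr, bicycle_path F 1 T Rr /\ offset Rr 0 = x.
Proof.
intros Hx; assert (H0 : 0 <= 0 <= T) by lra.
set (a := dot2 x (vel2 F 0)); set (b := dot2 x (rot2 (vel2 F 0))).
assert (Hab : a * a + b * b = 1).
{ unfold a, b; rewrite dot2_rot2_sq, Hx, (HFa 0 H0); ring. }
destruct (null_lift_coords a b 0 H0) as [Cg [Ca Cb]].
assert (Hnn : mink (null_lift a b 0) (null_lift a b 0) = 0)
  by (rewrite mink_null_lift by exact H0; lra).
exists (rear_of_null (null_lift a b 0)); split.
- apply rear_of_null_bicycle; [exact Hnn|].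
  apply (null_future_of_mink_H2 _ (G 0)); [exact Hnn | exact Cg | apply (HGa 0 H0)].
- assert (HD0 : lift_depth (null_lift a b 0) 0 = 1) by (unfold lift_depth; rewrite Cg; ring).
  unfold offset, rear_of_null, null_offset_dir; rewrite inv_on_in, HD0, Rinv_1, Ca, Cb by lra.
  rewrite (rot2_decomp x (vel2 F 0) (HFa 0 H0)); fold a b.
  destruct (F 0); apply vec2_eq; vec2_simpl; ring.
Qed.

Lemma C1_closed3_monodromy_id : C1_closed2 F T -> C1_closed3 G T -> monodromy_is_id F 1 T.
Proof.
intros HFc HGc x y Hx; split.
- intros [Rr [HB [H0 HTy]]]; rewrite <- H0, <- HTy.
  apply (C1_closed3_offset_periodic Rr HFc HGc HB).
- intros ->; destruct (exists_bicycle_path x Hx) as [Rr [HB H0]].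
  exists Rr; split; [exact HB | split; [exact H0|]].
  rewrite <- H0; apply (C1_closed3_offset_periodic Rr HFc HGc HB).
Qed.

Lemma monodromy_id_null_lift_ray : C1_closed2 F T -> monodromy_is_id F 1 T ->
  forall a b, a * a + b * b = 1 ->
  exists lam, 0 < lam /\ null_lift a b T = scal3 lam (null_lift a b 0).
Proof.
intros HFc Hid a b Hab; assert (H0 : 0 <= 0 <= T) by lra.
pose proof (HFa 0 H0) as Hp.
set (x := add2 (scal2 a (vel2 F 0)) (scal2 b (rot2 (vel2 F 0)))).
assert (Hx : on_circle 1 x).
{ unfold on_circle; transitivity (dot2 x x * dot2 (vel2 F 0) (vel2 F 0)); [rewrite Hp; ring|].
  rewrite <- dot2_rot2_sq; unfold x; rewrite dot2_comb_l, dot2_comb_r by exact Hp; lra. }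
destruct (exists_bicycle_path x Hx) as [Rr [HB H0x]].
assert (HTx : offset Rr T = x).
{ apply (Hid x _ Hx); exists Rr; split; [exact HB | split; [exact H0x | reflexivity]]. }
destruct (offset_lift_ray Rr HB) as [lam [Hlam Hray]].
exists lam; split; [exact Hlam|].
unfold offset_lift, offset_tan, offset_nor in Hray.
rewrite HTx, H0x, (C1_closed2_vel2 HFc) in Hray; unfold x in Hray.
rewrite dot2_comb_l, dot2_comb_r in Hray by exact Hp; exact Hray.
Qed.

End Development.

Theorem corollary3p4 (T : R) (F : R -> vec2) (G : R -> vec3) :
  0 < T ->
  smooth_curve2 F ->
  arclength2 F T ->
  C1_closed2 F T ->
  C2_curve3 G ->
  H2_arclength G T ->
  (forall t, 0 <= t <= T -> geod_curv G t = curv2 F t) ->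
  (C1_closed3 G T <-> monodromy_is_id F 1 T).
Proof.
intros HT HF HFa HFc HG HGa Hk; split.
- intros HGc; eapply C1_closed3_monodromy_id; eassumption.
- intros Hid; apply null_lift_rays_C1_closed3; try assumption.
  eapply monodromy_id_null_lift_ray; eassumption.
Qed.
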